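(* Let $q$ be a prime power and let $\mathcal{F}$ be a flag on $\mathbb{F}_{q^n}$ whose best friend is the subfield $\mathbb{F}_{q^m}$. Assume that the cyclic orbit flag code $\mathrm{Orb}(\mathcal{F})$ is an optimum distance flag code. Then the type vector of $\mathcal{F}$ is either $(m)$, $(n-m)$ or $(m,n-m)$. In each of these cases $|\mathrm{Orb}(\mathcal{F})|=\frac{q^n-1}{q^m-1}$, which is the largest possible cardinality of an optimum distance flag code on $\mathbb{F}_{q^n}$ of that type.
   Context: A flag of type $(t_1,\ldots,t_r)$ ($r\ge1$) on $\mathbb{F}_{q^n}$ is a sequence $(\mathcal{F}_1,\ldots,\mathcal{F}_r)$ of $\mathbb{F}_q$-subspaces with $\{0\}\subsetneq\mathcal{F}_1\subsetneq\cdots\subsetneq\mathcal{F}_r\subsetneq\mathbb{F}_{q^n}$ and $\dim_{\mathbb{F}_q}\mathcal{F}_i=t_i$. For $\gamma\in\mathbb{F}_{q^n}^*$, $\mathcal{F}\gamma=(\mathcal{F}_1\gamma,\ldots,\mathcal{F}_r\gamma)$ with $\mathcal{U}\gamma=\{u\gamma:u\in\mathcal{U}\}$, and $\mathrm{Orb}(\mathcal{F})=\{\mathcal{F}\gamma:\gamma\in\mathbb{F}_{q^n}^*\}$. A subfield $\mathbb{F}_{q^m}$ is a friend of $\mathcal{F}$ if every $\mathcal{F}_i$ is an $\mathbb{F}_{q^m}$-vector space; the best friend is the largest friend. Subspace distance $d_S(\mathcal{U},\mathcal{V})=\dim(\mathcal{U}+\mathcal{V})-\dim(\mathcal{U}\cap\mathcal{V})$;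 flag distance $d_f(\mathcal{F},\mathcal{F}')=\sum_i d_S(\mathcal{F}_i,\mathcal{F}'_i)$; the minimum distance of a set of flags is the minimum over distinct pairs ($0$ for a single flag). A set of flags of type $(t_1,\ldots,t_r)$ on $\mathbb{F}_{q^n}$ is an optimum distance flag code if its minimum distance equals $2\left(\sum_{t_i\le\lfloor n/2\rfloor}t_i+\sum_{t_i>\lfloor n/2\rfloor}(n-t_i)\right)$. *)

From HB Require Import structures.
From mathcomp Require Import all_boot all_order all_algebra all_field.
Set Implicit Arguments. Unset Strict Implicit. Unset Printing Implicit Defensive.
Import GRing.Theory.
Local Open Scope ring_scope.

(* F = F_q (any finite field, q = #|F|), L = F_{q^n} a finite field extension
   of F, n = \dim {:L}. Subspaces are F-subspaces of L. A flag is a list of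
   F-subspaces [:: F_1; ...; F_r]. *)
Section Flags.
Variables (F : finFieldType) (L : fieldExtType F).

Definition flag := seq {vspace L}.

Definition ltv (U V : {vspace L}) : bool := (U <= V)%VS && (U != V).

Definition is_flag (f : flag) : bool :=
  (0 < size f)%N && path ltv 0%VS (rcons f fullv).

Definition flag_type (f : flag) : seq nat := [seq \dim U | U <- f].

Definition is_flag_of_type (ty : seq nat) (f : flag) : bool :=
  is_flag f && (flag_type f == ty).

Definition vs_mul (U : {vspace L}) (g : L) : {vspace L} := (U * <[g]>)%VS.

Definition flag_mul (f : flag) (g : L) : flag := [seq vs_mul U g | U <- f].

Definition orb (f : flag) : seq flag :=
  undup [seq flag_mul f (g : L) | g : finvect_type L in [pred x : finvect_type L | x != 0]].

Definition dS (U V : {vspace L}) : nat := (\dim (U + V) - \dim (U :&: V))%N.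

Definition flag_dist (f g : flag) : nat := \sum_(p <- zip f g) dS p.1 p.2.

(* minimum distance of a set (list) of flags; 0 if no distinct pair *)
Definition min_dist (C : seq flag) : nat :=
  let ds := [seq flag_dist p.1 p.2 | p <- [seq (x, y) | x <- C, y <- C] & p.1 != p.2] in
  if ds is d :: ds' then foldr minn d ds' else 0%N.

Definition opt_bound (n : nat) (ty : seq nat) : nat :=
  (2 * \sum_(t <- ty) (if (t <= n./2)%N then t else n - t))%N.

Definition optimum_distance (ty : seq nat) (C : seq flag) : Prop :=
  min_dist C = opt_bound (\dim (fullv : {vspace L})) ty.

Definition friend (K : {subfield L}) (f : flag) : bool :=
  all (fun U => (K * U <= U)%VS) f.

Definition best_friend (K : {subfield L}) (f : flag) : Prop :=
  friend K f /\ forall K' : {subfield L}, friend K' f -> (K' <= K)%VS.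

End Flags.

From HB Require Import structures.
From mathcomp Require Import all_boot all_order all_algebra all_field.
From mathcomp Require Import zify.
Set Implicit Arguments. Unset Strict Implicit. Unset Printing Implicit Defensive.
Import GRing.Theory.

(** Multiplication by [g <> 0] fixes [f] exactly when [g] lies in the best
    friend [K] (an element fixing every component of [f] makes [K(g)] a friend),
    so the orbit has [(q^n - 1) / (q^m - 1)] elements and [f g <> f] for every
    [g] outside [K]. In an optimum distance code any two distinct flags are at
    maximal distance in every component. For [f] and [f g] this means that a
    component [U] with [dim U <= n/2] meets every [U g] trivially, whence
    [U = K u] for any nonzero [u] in [U]; and that a component with
    [dim U > n/2] spans [L] together with every [U g], whence [dim U = n - m]:
    a line [K x] with [x] outside [U] meets [U] trivially, and if [dim U + m < n]
    the space of all [g] mapping [U] into a hyperplane [H] containing [U] is too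
    big to fit in [K]. This leaves the types [(m)], [(n - m)] and [(m, n - m)].
    For the size bound, the first components of the flags of an optimum code
    pairwise meet trivially when [t <= n/2]; when [t > n/2] they pairwise span
    [L], and then the spaces [{g | U g <= H}] for a fixed hyperplane [H] pairwise
    meet trivially and have dimension at least [n - t]. In both cases one gets
    disjoint sets of at least [q^m - 1] nonzero vectors of [L]. *)

Lemma size_undup_uniform (T : eqType) (s : seq T) c :
  {in s, forall y, count_mem y s = c} -> size s = size (undup s) * c.
Proof.
move=> cnt; rewrite -(perm_size (perm_count_undup s)) size_flatten /shape -map_comp.
have sumn_const (t : seq T) : sumn [seq c | _ <- t] = size t * c.
  by elim: t => //= _ t ->; rewrite mulSn.
rewrite -sumn_const; congr sumn; apply/eq_in_map => y.
by rewrite mem_undup /= size_nseq => /cnt.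
Qed.

Lemma count_enum (T : finType) (A : {pred T}) (p : pred T) :
  count p (enum A) = #|[pred x in A | p x]|.
Proof.
rewrite cardE /enum_mem -!size_filter -!filter_predI; congr size.
by apply: eq_filter => x; rewrite /= andbC.
Qed.

Lemma sorted_opt_dims_cases n m (s : seq nat) : sorted ltn s -> s != [::] ->
  all (fun t => (t <= n./2) && (t == m) || (n./2 < t) && (t == n - m)) s ->
  [\/ s = [:: m] /\ m <= n./2, s = [:: n - m] /\ n./2 < n - m
    | s = [:: m; n - m] /\ m <= n./2].
Proof.
case: s => [|a [|b [|c s]]] //= + _.
- by rewrite andbT => _ /orP[] /andP[? /eqP<-]; [constructor 1 | constructor 2].
- rewrite !andbT => ab /andP[Pa Pb].
  case/orP: Pa => /andP[ha /eqP ea]; case/orP: Pb => /andP[hb /eqP eb];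
    subst; try by exfalso; lia.
  by constructor 3.
- case/andP => ab /andP[bc _] /and4P[Pa Pb Pc _].
  by case/orP: Pa => /andP[? /eqP ?]; case/orP: Pb => /andP[? /eqP ?];
    case/orP: Pc => /andP[? /eqP ?]; exfalso; lia.
Qed.

(* the largest subspace distance between two [t]-dimensional subspaces of an
   [m]-dimensional space *)
Definition max_dS (m t : nat) : nat := 2 * (if t <= m./2 then t else m - t).

Lemma opt_bound_cons m t ty : opt_bound m (t :: ty) = max_dS m t + opt_bound m ty.
Proof. by rewrite /opt_bound big_cons mulnDr. Qed.

Lemma foldr_minn_le d s e : e \in d :: s -> foldr minn d s <= e.
Proof.
elim: s => [|a s IH]; first by rewrite inE => /eqP ->.
rewrite /= geq_min !inE => /or3P[ed | /eqP-> | es].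
- by rewrite IH ?orbT // inE ed.
- by rewrite leqnn.
- by rewrite IH ?orbT // inE es orbT.
Qed.

Local Open Scope ring_scope.

Section CyclicOrbitFlagCodes.
Variables (F : finFieldType) (L : fieldExtType F).
Implicit Types (U V W H : {vspace L}) (K : {subfield L}) (f x y : flag L).

Local Notation n := (\dim (fullv : {vspace L})).
Local Notation q := #|F|.

Lemma notin_neq0 V z : z \notin V -> z != 0.
Proof. by apply: contraNneq => ->; rewrite mem0v. Qed.

Lemma mem_vs_mul U g z : g != 0 -> (z \in vs_mul U g) = (z / g \in U).
Proof.
move=> g0; apply/memv_cosetP/idP => [[u Uu ->]|zU]; first by rewrite mulfK.
by exists (z / g); rewrite ?divfK.
Qed.

Lemma dim_vs_mul U g : g != 0 -> \dim (vs_mul U g) = \dim U.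
Proof. exact: dim_cosetv. Qed.

Lemma vs_mulA U a b : vs_mul (vs_mul U a) b = vs_mul U (a * b).
Proof. by rewrite /vs_mul -prodvA prodv_line. Qed.

Lemma vs_mul1 U : vs_mul U 1 = U.
Proof. exact: prodv1. Qed.

Lemma vs_mul_subfield K U e : (K * U <= U)%VS -> e \in K -> e != 0 -> vs_mul U e = U.
Proof.
move=> KU eK e0; apply/eqP; rewrite eqEdim dim_vs_mul // leqnn andbT.
apply/prodvP => u _ Uu /vlineP[a ->].
by rewrite mulrC (subvP KU) ?memv_mul ?memvZ.
Qed.

Lemma adjoin_stable K U e : (K * U <= U)%VS -> vs_mul U e = U -> (<<K; e>> * U <= U)%VS.
Proof.
move=> KU eU; have eXU i u : u \in U -> e ^+ i * u \in U.
  elim: i => [|i IH] Uu; first by rewrite mul1r.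
  by rewrite exprS -mulrA -eU mulrC memv_mul ?memv_line ?IH.
apply/prodvP => _ u /Fadjoin_polyP[p /polyOverP pK ->] Uu.
rewrite horner_coef mulr_suml; apply: memv_suml => i _.
by rewrite -mulrA (subvP KU) ?memv_mul ?eXU.
Qed.

Lemma flag_mulA f a b : flag_mul (flag_mul f a) b = flag_mul f (a * b).
Proof. by rewrite /flag_mul -map_comp; apply: eq_map => U; rewrite /= vs_mulA. Qed.

Lemma flag_mul1 f : flag_mul f 1 = f.
Proof. by rewrite /flag_mul (eq_map vs_mul1) map_id. Qed.

Lemma flag_type_mul f g : g != 0 -> flag_type (flag_mul f g) = flag_type f.
Proof.
by move=> g0; rewrite /flag_type -map_comp; apply: eq_map => U; rewrite /= dim_vs_mul.
Qed.

Lemma eq_flag_mul_self K f g : best_friend K f -> g != 0 -> (flag_mul f g == f) = (g \in K).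
Proof.
case=> fK bestK g0; apply/eqP/idP => [fg|gK]; last first.
  rewrite /flag_mul -[RHS]map_id; apply/eq_in_map => U Uf.
  exact: vs_mul_subfield (allP fK U Uf) gK g0.
suff /bestK/subvP : friend <<K; g>>%AS f by apply; apply: memv_adjoin.
apply/allP => U Uf; apply: adjoin_stable; first exact: (allP fK).
have := congr1 (nth 0%VS ^~ (index U f)) fg.
by rewrite /flag_mul (nth_map 0%VS) ?index_mem // nth_index.
Qed.

Lemma eq_flag_mul K f a g : best_friend K f -> a != 0 -> g != 0 ->
  (flag_mul f a == flag_mul f g) = (a / g \in K).
Proof.
move=> bf a0 g0; rewrite -(eq_flag_mul_self bf) ?mulf_neq0 ?invr_eq0 //.
apply/eqP/eqP => fag; last by rewrite -[in RHS]fag flag_mulA divfK.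
by rewrite -flag_mulA fag flag_mulA mulfV ?flag_mul1.
Qed.

Lemma dS_le_max U V : \dim U = \dim V -> (dS U V <= max_dS n (\dim U))%N.
Proof.
move=> dUV; have := dimv_sum_cap U V; have := dimvS (capvSl U V).
have := dimvS (subvf (U + V)); rewrite /dS /max_dS -dUV; case: ifP; lia.
Qed.

Lemma max_dS_cap0 U V : \dim U = \dim V -> (\dim U <= n./2)%N ->
  dS U V = max_dS n (\dim U) -> (U :&: V = 0)%VS.
Proof.
move=> dUV small dS_max; apply/eqP; rewrite -dimv_eq0.
have := dimv_sum_cap U V; have := dimvS (capvSl U V).
move: dS_max; rewrite /dS /max_dS small -dUV; lia.
Qed.

Lemma max_dS_addv_full U V : \dim U = \dim V -> (n./2 < \dim U)%N ->
  dS U V = max_dS n (\dim U) -> (U + V = fullv)%VS.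
Proof.
move=> dUV large dS_max; apply/eqP; rewrite eqEdim subvf /=.
have := dimv_sum_cap U V; have := dimvS (capvSl U V); have := dimvS (addvSl U V).
move: dS_max; rewrite /dS /max_dS leqNgt large -dUV /=; lia.
Qed.

Lemma flag_dist_cons U V x y : flag_dist (U :: x) (V :: y) = (dS U V + flag_dist x y)%N.
Proof. by rewrite /flag_dist big_cons. Qed.

Lemma flag_dist_le x y : flag_type x = flag_type y ->
  (flag_dist x y <= opt_bound n (flag_type x))%N.
Proof.
elim: x y => [|U x IH] [|V y] //; first by rewrite /flag_dist big_nil.
by move=> [dUV dxy]; rewrite flag_dist_cons opt_bound_cons leq_add ?dS_le_max ?IH.
Qed.

Lemma max_dS_of_opt_flag_dist x y : flag_type x = flag_type y ->
  (opt_bound n (flag_type x) <= flag_dist x y)%N ->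
  {in zip x y, forall p, dS p.1 p.2 = max_dS n (\dim p.1)}.
Proof.
elim: x y => [|U x IH] [|V y] // [dUV dxy].
rewrite flag_dist_cons [flag_type _]/= opt_bound_cons => opt p.
have := dS_le_max dUV; have := flag_dist_le dxy.
rewrite inE => + + /predU1P[-> //= | pxy]; first lia.
by move=> ? ?; apply: IH pxy => //; lia.
Qed.

Lemma min_dist_le (C : seq (flag L)) x y : x \in C -> y \in C -> x != y ->
  (min_dist C <= flag_dist x y)%N.
Proof.
move=> xC yC xy; rewrite /min_dist; set ds := map _ _.
have : flag_dist x y \in ds.
  apply: (map_f (fun p : flag L * flag L => flag_dist p.1 p.2) (x := (x, y))).
  by rewrite mem_filter xy allpairs_f.
by case: ds => // d s; apply: foldr_minn_le.
Qed.

Lemma optimum_distance_dS ty (C : seq (flag L)) x y : optimum_distance ty C ->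
  x \in C -> y \in C -> x != y -> flag_type x = ty -> flag_type y = ty ->
  {in zip x y, forall p, dS p.1 p.2 = max_dS n (\dim p.1)}.
Proof.
move=> opt xC yC xy x_type y_type.
apply: max_dS_of_opt_flag_dist; first by rewrite x_type y_type.
by rewrite x_type -opt min_dist_le.
Qed.

Lemma dimv_bigcap_ge (I : finType) (P : pred I) (Vs : I -> {vspace L}) :
  (n - \sum_(i | P i) (n - \dim (Vs i)) <= \dim (\bigcap_(i | P i) Vs i))%N.
Proof.
elim/big_rec2: _ => [|i W s _ IH]; first by rewrite subn0.
have := dimv_sum_cap (Vs i) W; have := dimvS (subvf (Vs i + W)); lia.
Qed.

(* the space of all [g] with [U g <= H]; testing a basis of [U] is enough *)
Definition transporter U H : {vspace L} :=
  (\bigcap_(i < \dim U) vs_mul H ((vbasis U)`_i)^-1)%VS.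

Lemma mem_transporter U H g : (g \in transporter U H) = (vs_mul U g <= H)%VS.
Proof.
have b_nz (i : 'I_(\dim U)) : (vbasis U)`_i != 0.
  by apply: basis_not0 (vbasisP U) _; rewrite mem_nth ?size_tuple.
have bgH (i : 'I_(\dim U)) :
    (<[g]> <= vs_mul H ((vbasis U)`_i)^-1)%VS = ((vbasis U)`_i * g \in H).
  by rewrite -memvE mem_vs_mul ?invr_eq0 ?b_nz // invrK mulrC.
rewrite memvE; apply/subv_bigcapP/idP => [UgH | UgH i _]; last first.
  by rewrite bgH (subvP UgH) ?memv_mul ?memv_line ?vbasis_mem ?mem_nth ?size_tuple.
apply/prodvP => u _ Uu /vlineP[a ->]; rewrite (coord_vbasis Uu) mulr_suml.
apply: memv_suml => i _; rewrite -scalerAl -scalerAr; do 2 apply: memvZ.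
by rewrite -bgH UgH.
Qed.

Lemma dim_transporter U H :
  (n - \dim U * (n - \dim H) <= \dim (transporter U H))%N.
Proof.
apply: leq_trans (dimv_bigcap_ge _ _); rewrite leq_sub2l //.
rewrite (eq_bigr (fun=> n - \dim H)%N) ?sum_nat_const ?card_ord // => i _.
by rewrite dim_vs_mul // invr_eq0 (basis_not0 (vbasisP U)) ?mem_nth ?size_tuple.
Qed.

Lemma hyperplane_sup U : (\dim U < n)%N -> exists2 H, (U <= H)%VS & \dim H = n.-1.
Proof.
move=> Un; set X := behead (vbasis U^C).
have freeX : free X.
  have := basis_free (vbasisP U^C); rewrite /X; case: (tval _) => //= x X'.
  by rewrite free_cons => /andP[].
exists (U + <<X>>)%VS; first exact: addvSl.
rewrite dimv_disjoint_sum; last first.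
  apply/eqP; rewrite -subv0 -(capv_compl U) capvS //.
  by apply/span_subvP => x /mem_behead /vbasis_mem.
rewrite (eqnP freeX) size_behead size_tuple dimv_compl; lia.
Qed.

Lemma dim_stable_proper_le K U : (K * U <= U)%VS -> U != fullv ->
  (\dim U + \dim K <= n)%N.
Proof.
move=> KU U_proper; have [x _ xU] : exists2 x, x \in fullv & x \notin U.
  by apply/subvPn; apply: contra U_proper => fU; rewrite eqEsubv subvf.
have Kx_cap : (vs_mul K x :&: U = 0)%VS.
  apply/eqP; rewrite -subv0; apply/subvP => y /memv_capP[].
  rewrite mem_vs_mul ?(notin_neq0 xU) // memv0 => yxK yU; apply/contraR: xU => y0.
  by rewrite -(divfK y0 x) -invf_div (subvP KU) ?memv_mul ?memvV.
have := dimvS (subvf (vs_mul K x + U)).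
by rewrite dimv_disjoint_sum // dim_vs_mul ?(notin_neq0 xU) // addnC.
Qed.

Lemma dim_eq_of_disjoint_translates K U : U != 0%VS -> (K * U <= U)%VS ->
  (forall g, g \notin K -> (U :&: vs_mul U g = 0)%VS) -> \dim U = \dim K.
Proof.
move=> U0 KU disj; set u0 := vpick U.
have u00 : u0 != 0 by rewrite vpick0.
suff -> : U = vs_mul K u0 by rewrite dim_vs_mul.
apply/eqP; rewrite eqEsubv; apply/andP; split; last first.
  by apply: subv_trans KU; apply: prodvSr; rewrite -memvE memv_pick.
apply/subvP => u Uu; rewrite mem_vs_mul //; apply/contraT => gK.
have g0 := notin_neq0 gK.
have u_nz : u != 0 by apply: contraNneq g0 => ->; rewrite mul0r.
have /eqP := disj _ gK; rewrite -subv0 => /subvP/(_ u).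
rewrite memv_cap Uu mem_vs_mul // invf_div mulrC divfK // memv_pick memv0.
by rewrite (negPf u_nz) => /(_ isT).
Qed.

Lemma dim_eq_codim_of_spanning_translates K U : (\dim U < n)%N -> (K * U <= U)%VS ->
  (forall g, g \notin K -> (U + vs_mul U g = fullv)%VS) -> \dim U = (n - \dim K)%N.
Proof.
move=> Un KU span.
have U_proper : U != fullv by apply: contraTneq Un => ->; rewrite ltnn.
have := dim_stable_proper_le KU U_proper.
suff : (n <= \dim U + \dim K)%N by lia.
rewrite leqNgt; apply/negP => small.
have [H UH dH] := hyperplane_sup Un.
have : ~~ (transporter U H <= K)%VS.
  apply/negP => /dimvS; have := dim_transporter U H.
  move: small; set m := \dim K; rewrite dH -subn1 subKn ?muln1; lia.
case/subvPn => g gT gK.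
have : (U + vs_mul U g <= H)%VS by rewrite subv_add UH -mem_transporter.
by rewrite span // => /dimvS; rewrite dH; lia.
Qed.

Local Notation fT := (finvect_type L).

Lemma card_finvect : #|fT| = (q ^ n)%N.
Proof. by rewrite -(@card_vspacef F fT (Vector.class L)) card_vspace. Qed.

Lemma card_nonzero_vs V : #|[pred x : fT | x \in V & x != 0]| = (q ^ \dim V - 1)%N.
Proof.
rewrite -(@card_vspace F fT (Vector.class L) V) [in RHS](cardD1 0) mem0v add1n subn1 /=.
by apply: eq_card => x; rewrite !inE andbC.
Qed.

Lemma expq_dim_gt1 K : (1 < q ^ \dim K)%N.
Proof. by rewrite -(expn0 q) ltn_exp2l ?adim_gt0 ?card_finNzRing_gt1. Qed.

Lemma mem_orb f g : g != 0 -> flag_mul f g \in orb f.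
Proof.
by move=> g0; rewrite mem_undup; apply: (image_f (fun g : fT => flag_mul f g)); rewrite inE.
Qed.

Lemma size_orb K f : best_friend K f ->
  size (orb f) = ((q ^ n - 1) %/ (q ^ \dim K - 1))%N.
Proof.
move=> bf; set s := [seq flag_mul f g | g : fT in [pred x : fT | x != 0]].
have size_s : size s = (q ^ n - 1)%N.
  rewrite size_image -card_finvect subn1 -(cardC1 (0 : fT)).
  by apply: eq_card => x; rewrite !inE.
have count_s : {in s, forall y, count_mem y s = (q ^ \dim K - 1)%N}.
  move=> y /imageP[g]; rewrite inE => g0 ->.
  rewrite count_map count_enum -(dim_vs_mul K g0) -(card_nonzero_vs (vs_mul K g)).
  apply: eq_card => x; rewrite !inE /=.
  have [->|x0] := eqVneq x 0; first by rewrite andbF.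
  by rewrite andbT (eq_flag_mul bf x0 g0) mem_vs_mul.
by rewrite /orb -size_s (size_undup_uniform count_s) mulnK // subn_gt0 expq_dim_gt1.
Qed.

Lemma packing_bound (T : eqType) (C : seq T) (W : T -> {vspace L}) k :
  uniq C -> {in C, forall i, k <= \dim (W i)}%N ->
  {in C &, forall i j, i != j -> (W i :&: W j = 0)%VS} ->
  (size C * (q ^ k - 1) <= q ^ n - 1)%N.
Proof.
move=> uC dimW disj; pose A i := [set z : fT | (z \in W i) && (z != 0)].
have cardA i : #|A i| = (q ^ \dim (W i) - 1)%N.
  by rewrite -card_nonzero_vs cardsE.
suff packed : (size C * (q ^ k - 1) <= #|\bigcup_(i <- C) A i|)%N.
  rewrite (leq_trans packed) // -card_finvect subn1 -(cardsC1 (0 : fT)) subset_leq_card //.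
  elim/big_rec: _ => [|i S _ sub]; rewrite ?sub0set // subUset sub andbT.
  by apply/subsetP => z; rewrite !inE => /andP[].
elim: C uC dimW disj => [|a C IH] /=; first by rewrite mul0n.
case/andP => aC uC dimW disj; rewrite big_cons cardsU.
have disjA : A a :&: \bigcup_(i <- C) A i = set0.
  apply/disjoint_setI0; rewrite disjoint_sym disjoints_subset big_seq.
  elim/big_rec: _ => [|i S iC sub]; rewrite ?sub0set // subUset sub andbT.
  apply/subsetP => z; rewrite !inE => /andP[zWx z0]; apply/negP => /andP[zWa _].
  have ax : a != i by apply: contraNneq aC => ->.
  have /eqP := disj a i (mem_head _ _) (mem_behead (iC : i \in behead (a :: C))) ax.
  rewrite -subv0 => /subvP/(_ z); rewrite memv_cap zWa zWx memv0 (negPf z0).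
  by move=> /(_ isT).
rewrite disjA cards0 subn0 mulSn leq_add //.
  by rewrite cardA leq_sub2r // leq_pexp2l ?dimW ?mem_head // ltnW ?card_finNzRing_gt1.
apply: IH => // [i iC | i j iC jC]; first by apply: dimW; rewrite inE iC orbT.
by apply: disj; rewrite inE ?iC ?jC orbT.
Qed.

Lemma orbit_dS_max K f U g : best_friend K f -> optimum_distance (flag_type f) (orb f) ->
  U \in f -> g \notin K -> dS U (vs_mul U g) = max_dS n (\dim U).
Proof.
move=> bf opt Uf gK; have g0 := notin_neq0 gK.
have f_orb : f \in orb f by have := mem_orb f (oner_neq0 L); rewrite flag_mul1.
have f_fg : f != flag_mul f g by rewrite eq_sym (eq_flag_mul_self bf g0).
have U_zip : (U, vs_mul U g) \in zip f (flag_mul f g).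
  rewrite /flag_mul -[f in zip f _]map_id zip_map.
  exact: (map_f (fun V => (V, vs_mul V g))).
exact: (optimum_distance_dS opt f_orb (mem_orb f g0) f_fg erefl (flag_type_mul f g0) U_zip).
Qed.

Lemma dim_orbit_component K f U : best_friend K f ->
  optimum_distance (flag_type f) (orb f) -> U \in f -> (0 < \dim U < n)%N ->
  ((\dim U <= n./2) && (\dim U == \dim K) || (n./2 < \dim U) && (\dim U == n - \dim K))%N.
Proof.
move=> bf opt Uf /andP[U_pos Un]; have KU := allP bf.1 U Uf.
have dim_Ug g : g \notin K -> \dim U = \dim (vs_mul U g).
  by move=> gK; rewrite dim_vs_mul ?(notin_neq0 gK).
have dS_Ug g : g \notin K -> dS U (vs_mul U g) = max_dS n (\dim U).
  exact: orbit_dS_max bf opt Uf.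
have [small|large] := leqP (\dim U) n./2; apply/orP; [left | right].
  rewrite (dim_eq_of_disjoint_translates _ KU) ?eqxx -?dimv_eq0 -?lt0n // => g gK.
  exact: max_dS_cap0 (dim_Ug g gK) small (dS_Ug g gK).
rewrite (dim_eq_codim_of_spanning_translates Un KU) ?eqxx // => g gK.
exact: max_dS_addv_full (dim_Ug g gK) large (dS_Ug g gK).
Qed.

Lemma ltv_dim U V : ltv U V -> (\dim U < \dim V)%N.
Proof.
by case/andP => sUV nUV; rewrite ltn_neqAle (dimv_leqif_eq sUV).2 nUV (dimvS sUV).
Qed.

Lemma is_flag_type_sorted f : is_flag f ->
  [/\ flag_type f != [::], sorted ltn (flag_type f)
    & all (fun t => 0 < t < n)%N (flag_type f)].
Proof.
case/andP => f_nz f_path; have := sub_path (e' := relpre (@dimv _ _) ltn) ltv_dim f_path.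
rewrite -path_map map_rcons dimv0 (path_pairwise ltn_trans) pairwise_cons all_rcons.
rewrite pairwise_rcons => /andP[/andP[_ pos] /andP[lt_n pw]].
split; first by rewrite -size_eq0 size_map -lt0n.
  by rewrite (sorted_pairwise ltn_trans).
by apply/allP => t tf; rewrite (allP pos) ?(allP lt_n).
Qed.

Lemma orbit_optimum_type K f : is_flag f -> best_friend K f ->
  optimum_distance (flag_type f) (orb f) ->
  [\/ flag_type f = [:: \dim K] /\ (\dim K <= n./2)%N,
      flag_type f = [:: (n - \dim K)%N] /\ (n./2 < n - \dim K)%N
    | flag_type f = [:: \dim K; (n - \dim K)%N] /\ (\dim K <= n./2)%N].
Proof.
move=> /is_flag_type_sorted[f_nz f_sorted f_dims] bf opt.
apply: sorted_opt_dims_cases => //; apply/allP => _ /mapP[U Uf ->].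
exact: (dim_orbit_component bf opt Uf (allP f_dims _ (map_f _ Uf))).
Qed.

Lemma dim_head_flag x t ty : flag_type x = t :: ty -> \dim (head 0%VS x) = t.
Proof. by case: x => // U x [<-]. Qed.

Lemma optimum_code_head_dS (C : seq (flag L)) t ty x y :
  optimum_distance (t :: ty) C -> {in C, forall z, flag_type z = t :: ty} ->
  x \in C -> y \in C -> x != y -> dS (head 0%VS x) (head 0%VS y) = max_dS n t.
Proof.
move=> opt tyC xC yC xy; have x_type := tyC x xC; have y_type := tyC y yC.
have heads_zip : (head 0%VS x, head 0%VS y) \in zip x y.
  by case: x x_type {xC xy} => // U x _; case: y y_type {yC} => // V y _; apply: mem_head.
rewrite -(dim_head_flag x_type).
exact: (optimum_distance_dS opt xC yC xy x_type y_type heads_zip).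
Qed.

Lemma optimum_code_size_small (C : seq (flag L)) t ty : uniq C ->
  {in C, forall x, flag_type x = t :: ty} -> optimum_distance (t :: ty) C ->
  (t <= n./2)%N -> (size C * (q ^ t - 1) <= q ^ n - 1)%N.
Proof.
move=> uC tyC opt small.
apply: (packing_bound (W := head 0%VS) uC) => [x xC | x y xC yC xy].
  by rewrite (dim_head_flag (tyC x xC)).
have dx := dim_head_flag (tyC x xC); have dy := dim_head_flag (tyC y yC).
by apply: max_dS_cap0; rewrite ?dx ?dy ?(optimum_code_head_dS opt tyC xC yC xy).
Qed.

Lemma optimum_code_size_large (C : seq (flag L)) t ty : uniq C ->
  {in C, forall x, flag_type x = t :: ty} -> optimum_distance (t :: ty) C ->
  (n./2 < t)%N -> (size C * (q ^ (n - t) - 1) <= q ^ n - 1)%N.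
Proof.
move=> uC tyC opt large.
have [n0|n_pos] := posnP n; first by rewrite n0 sub0n expn0 subnn muln0.
have [H _ dH] : exists2 H : {vspace L}, (0 <= H)%VS & \dim H = n.-1.
  by apply: hyperplane_sup; rewrite dimv0.
apply: (packing_bound (W := fun x => transporter (head 0%VS x) H) uC).
  move=> x xC; have := dim_transporter (head 0%VS x) H.
  by rewrite dH (dim_head_flag (tyC x xC)) -subn1 subKn ?muln1.
move=> x y xC yC xy.
have dx := dim_head_flag (tyC x xC); have dy := dim_head_flag (tyC y yC).
have span : (head 0%VS x + head 0%VS y = fullv)%VS.
  by apply: max_dS_addv_full; rewrite ?dx ?dy ?(optimum_code_head_dS opt tyC xC yC xy).
apply/eqP; rewrite -subv0; apply/subvP => g /memv_capP[gx gy]; rewrite memv0.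
apply/contraT => g0.
have : (vs_mul fullv g <= H)%VS.
  by rewrite -span /vs_mul prodvDl subv_add -!mem_transporter gx gy.
by move/dimvS; rewrite dim_vs_mul // dH; lia.
Qed.

End CyclicOrbitFlagCodes.

Theorem corollary4p23 (F : finFieldType) (L : fieldExtType F)
    (f : flag L) (K : {subfield L}) :
  is_flag f ->
  best_friend K f ->
  optimum_distance (flag_type f) (orb f) ->
  let n := \dim (fullv : {vspace L}) in
  let m := \dim K in
  let q := #|F| in
  [\/ flag_type f = [:: m], flag_type f = [:: (n - m)%N]
    | flag_type f = [:: m; (n - m)%N]] /\
  size (orb f) = ((q ^ n - 1) %/ (q ^ m - 1))%N /\
  (forall C : seq (flag L),
     uniq C -> all (is_flag_of_type (flag_type f)) C ->
     optimum_distance (flag_type f) C ->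
     (size C <= (q ^ n - 1) %/ (q ^ m - 1))%N).
Proof.
move=> f_flag bf opt n m q.
have type_f := orbit_optimum_type f_flag bf opt.
split; first by case: type_f => -[-> _]; [constructor 1 | constructor 2 | constructor 3].
split; first exact: size_orb.
move=> C uC /allP C_type optC; rewrite leq_divRL ?subn_gt0 ?expq_dim_gt1 //.
have tyC : {in C, forall x, flag_type x = flag_type f}.
  by move=> x /C_type /andP[_ /eqP].
case: type_f => -[ft bound]; rewrite ft in tyC optC.
- exact: optimum_code_size_small uC tyC optC bound.
- have := optimum_code_size_large uC tyC optC bound.
  by rewrite subKn // dimvS ?subvf.
- exact: optimum_code_size_small uC tyC optC bound.
Qed.
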